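(* Let $\operatorname{rk}L=2$ with basis $e_1,e_2$, $x_i=X^{f_i}$ for the dual basis, $k=\omega(e_1,e_2)\neq0$, and let $m_1\ge1$, $m_2\ge0$. Let $\Sigma=\{m_1\times e_2,\ m_2\times(-e_2)\}$ and let $\Sigma'=\{(m_1-1)\times e_2,\ (m_2+1)\times(-e_2)\}$ be its mutation in (one copy of) $e_2$. Then $\mathcal U(\Sigma)=\mu_{e_2}^*\bigl(\mathcal U(\Sigma')\bigr)$, where $\mu_{e_2}^*$ is the substitution $x_1\mapsto x_1$, $x_2\mapsto x_2/(1+x_1^k)$.
   Context: For a lattice $L$ with skew-symmetric integral bilinear form $\omega$: $L^*=\mathrm{Hom}(L,\mathbb Z)$, $(\cdot,\cdot)$ the canonical pairing; $\mathcal Q=\mathbb Q(e^{2\pi i\mathbb Q})$ is $\mathbb Q$ with all roots of unity adjoined; $\mathcal Q[L^*]$ is the group algebra of $L^*$ with monomials $X^m$, and $\mathbb K_L$ its fraction field. For $v\in L$, $\mu_v^*$ is the $\mathcal Q$-algebra automorphism of $\mathbb K_L$ with $\mu_v^*(X^m)=X^m(1+X^{\omega(\cdot,v)})^{-(m,v)}$, where $\omega(\cdot,v)\in L^*$ is $w\mapsto\omega(w,v)$. An exchange collection is a finite tuple of vectors with multiplicity function $m_V$; $\{m_1\times u_1,m_2\times u_2\}$ denotes the collection with $u_j$ of multiplicity $m_j$. The upper bound is $\mathcal U(V)=\mathcal Q[L^*]\cap\bigcap_{v\in L}(\mu_v^* )^{m_V(v)}(\mathcal Q[L^*])\subset\mathbb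 K_L$. *)

From HB Require Import structures.
From mathcomp Require Import all_boot all_order all_algebra.
Set Implicit Arguments. Unset Strict Implicit. Unset Printing Implicit Defensive.
Import Order.TTheory GRing.Theory Num.Theory.
Local Open Scope ring_scope.

(* Rank-2 lattice L = Z^2 with basis e1=(1,0), e2=(0,1); L^* = Z^2 with the
   dual basis f1, f2.  The skew form is omega(w,v) = k (w1 v2 - w2 v1),
   so omega(e1,e2) = k.  The group algebra F[L^*] is the ring of Laurent
   polynomials in x1 = X^{f1}, x2 = X^{f2}; its fraction field K_L is
   realised as the fraction field of F[x1][x2] = {poly {poly F}}. *)

Section Defs.
Variable F : fieldType.

Definition Rpol := {poly {poly F}}.
Definition KL := {fraction Rpol}.

Definition x1 : KL := tofrac (('X : {poly F})%:P : Rpol).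
Definition x2 : KL := tofrac ('X : Rpol).

Definition mono (m : int * int) : KL := x1 ^ m.1 * x2 ^ m.2.

(* omega(., v) as an element of L^* (coordinates in the dual basis) *)
Definition omega_v (k : int) (v : int * int) : int * int :=
  (k * v.2, - (k * v.1)).

Definition pairing (m v : int * int) : int := m.1 * v.1 + m.2 * v.2.

(* image of X^{f_i} under mu_v^star *)
Definition muimg (k : int) (v m : int * int) : KL :=
  mono m * (1 + mono (omega_v k v)) ^ (- pairing m v).

Definition subst2 (y1 y2 : KL) (p : Rpol) : KL :=
  \sum_(i < size p) \sum_(j < size p`_i)
     tofrac (((p`_i)`_j)%:P%:P : Rpol) * y1 ^+ j * y2 ^+ i.

(* mu_v^star : the automorphism of K_L with mu_v^star(X^m) = X^m (1+X^{omega(.,v)})^{-(m,v)},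
   i.e. the substitution x_i |-> mu_v^star(X^{f_i}), applied to a representative
   fraction p/q. *)
Definition mu (k : int) (v : int * int) (f : KL) : KL :=
  let y1 := muimg k v (1, 0) in
  let y2 := muimg k v (0, 1) in
  subst2 y1 y2 \n_(repr f) / subst2 y1 y2 \d_(repr f).

Definition laurent (f : KL) : Prop :=
  exists (p : Rpol) (n : nat), f = tofrac p / (x1 * x2) ^+ n.

Definition in_mu_pow_image (k : int) (v : int * int) (n : nat) (f : KL) : Prop :=
  exists g : KL, laurent g /\ f = iter n (mu k v) g.

(* the upper bound U(V) for an exchange collection given by its
   multiplicity function mV : L -> nat *)
Definition upper_bound (k : int) (mV : int * int -> nat) (f : KL) : Prop :=
  laurent f /\ forall v : int * int, in_mu_pow_image k v (mV v) f.

End Defs.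

(* the exchange collection { a x e2, b x (-e2) } *)
Definition coll_e2 (a b : nat) (v : int * int) : nat :=
  if v == (0%R, 1%R) then a else if v == (0%R, (-1)%R) then b else 0%N.

From HB Require Import structures.
From mathcomp Require Import all_boot all_order all_algebra.
From mathcomp Require Import ring zify.
Import Order.TTheory GRing.Theory Num.Theory.
Set Implicit Arguments. Unset Strict Implicit. Unset Printing Implicit Defensive.
Local Open Scope ring_scope.

(* Both mu_{e2}^* and mu_{-e2}^* fix x1 and multiply x2 by a nonzero element
   of F(x1); we call such substitutions twists (twist r : x2 |-> x2 * rval r).
   Twists compose by multiplying their factors, so sigma := mu_{e2}^* has
   integer powers sigma^z, and mu_{-e2}^* differs from sigma^-1 by a monomial
   twist x2 |-> x2 * x1^-k, which preserves the Laurent ring L.  Hence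
   (upper_boundE)  U({a x e2, b x (-e2)}) = {f | f, sigma^-a f, sigma^b f in L}.
   Up to a monomial twist, sigma^j is x2 |-> x2 / q^j with q = 1 + x1^|k|
   coprime to x1, and sigma^j (P / (x1 x2)^N) is Laurent iff q^(j(i-N))
   divides the x2^i-coefficient of P for all i >= N (laurent_twist_rqinv).
   So {z | sigma^z f in L} is an interval (laurent_orbit_convex), and the
   proposition follows with g = sigma^-1 f: f, sigma^-m1 f in L force
   sigma^-1 f in L, and g, sigma^(m2+1) g in L force sigma g = f in L. *)

Lemma tofrac_repr (R : idomainType) (x : {fraction R}) :
  x = tofrac \n_(repr x) / tofrac \d_(repr x).
Proof.
rewrite -{1}[x]reprK; case: (repr x) => [[n d] /= dn]; unlock tofrac.
rewrite -[_^-1]FracField.pi_inv -[_ * _]FracField.pi_mul.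
apply/eqmodP => /=; rewrite FracField.equivfE /FracField.mulf /FracField.invf /=.
by rewrite !numden_Ratio ?(oner_neq0, mul1r, mulr1) // mulrC.
Qed.

Lemma fracP (R : idomainType) (x : {fraction R}) :
  exists p q, q != 0 /\ x = tofrac p / tofrac q.
Proof.
by exists \n_(repr x), \d_(repr x); split; [exact: denom_ratioP | exact: tofrac_repr].
Qed.

Lemma mul_ratio_rearrange (K : fieldType) (a b c d w : K) : a != 0 -> w != 0 ->
  d * (c * (b / a)) = d * b * w * c / (a * w).
Proof. by move=> ha hw; field; rewrite ha hw. Qed.

Lemma inv_monomial (K : fieldType) (x y : K) a b : x != 0 -> y != 0 ->
  (x ^+ a * y ^+ b)^-1 = y ^+ a * x ^+ b / (x * y) ^+ (a + b).
Proof. by move=> hx hy; rewrite exprMn !exprD; field; rewrite !expf_neq0. Qed.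

Lemma inv_twisted_monomial (K : fieldType) (x y : K) a b : x != 0 -> y != 0 ->
  (x * (y * (x ^+ a / x ^+ b)))^-1 = x ^+ b * (x ^+ a.+1 * y ^+ 1)^-1.
Proof. by move=> hx hy; rewrite exprS; field; rewrite hx hy !expf_neq0. Qed.

Lemma div_twisted_pow (K : fieldType) (x y z t : K) D n : (n <= D)%N ->
  x != 0 -> y != 0 -> z != 0 ->
  t / z ^+ D / (x * (y * (1 / z))) ^+ n = t / (z ^+ (D - n) * (x * y) ^+ n).
Proof.
move=> hnD hx hy hz; rewrite -{1}(subnK hnD) exprD !exprMn.
by rewrite expr1n exprVn mul1r; field; rewrite !expf_neq0.
Qed.

Lemma pow_ratio_split (K : fieldType) (x z : K) s m : x != 0 -> z != 0 ->
  (x ^+ s / z) ^+ m = x ^+ (s * m) / x ^+ 0 * (1 / z ^+ m).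
Proof.
by move=> hx hz; rewrite exprMn exprVn -exprM; field; rewrite ?expf_neq0 ?oner_neq0.
Qed.

Lemma pow_ratio_unsplit (K : fieldType) (x z : K) s m : x != 0 -> z != 0 ->
  1 / z ^+ m = x ^+ 0 / x ^+ (s * m) * (x ^+ s / z) ^+ m.
Proof.
by move=> hx hz; rewrite exprMn exprVn -exprM; field; rewrite ?expf_neq0 ?oner_neq0.
Qed.

Lemma inv_pow_cofactor (K : fieldType) (t t' x : K) a b n : t != 0 -> x != 0 ->
  t * t' = x ^+ a / x ^+ b -> (t' ^+ n)^-1 = x ^+ (b * n) / x ^+ (a * n) * t ^+ n.
Proof.
move=> ht hx h; have -> : t' = x ^+ a / x ^+ b / t by rewrite -h mulrC mulKf.
by rewrite !exprMn !exprVn -!exprM; field; rewrite ?expf_neq0.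
Qed.

Lemma pow_cofactor (K : fieldType) (t t' x : K) a b n : t != 0 -> x != 0 ->
  t * t' = x ^+ a / x ^+ b -> t ^+ n = x ^+ (a * n) / x ^+ (b * n) * (t' ^+ n)^-1.
Proof.
move=> ht hx h; have -> : t' = x ^+ a / x ^+ b / t by rewrite -h mulrC mulKf.
by rewrite !exprMn !exprVn -!exprM; field; rewrite ?expf_neq0.
Qed.

Lemma add1_invf (K : fieldType) (x : K) : x != 0 -> 1 + x^-1 = (1 + x) / x.
Proof. by move=> hx; rewrite mulrDl divff // mul1r addrC. Qed.

Section RankTwo.
Variable F : fieldType.
Local Notation KL := (KL F).
Local Notation Rpol := (Rpol F).
Local Notation x1 := (x1 F).
Local Notation x2 := (x2 F).
Local Notation laurent := (@laurent F).
Local Notation muimg := (@muimg F).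

Definition polyx1 : {poly F} -> KL := (@tofrac Rpol) \o (@polyC {poly F}).
HB.instance Definition _ := GRing.RMorphism.copy polyx1 polyx1.
Arguments polyx1 : simpl never.

Lemma polyx1_inj : injective polyx1.
Proof. by move=> u v /eqP; rewrite tofrac_eq => /eqP /polyC_inj. Qed.

Lemma polyx1_neq0 u : u != 0 -> polyx1 u != 0.
Proof. by move=> hu; rewrite tofrac_eq0 polyC_eq0. Qed.

Lemma polyx1Xn n : polyx1 'X^n = x1 ^+ n.
Proof. exact: rmorphXn. Qed.

Lemma x1_neq0 : x1 != 0.
Proof. by rewrite tofrac_eq0 polyC_eq0 polyX_eq0. Qed.

Lemma x2_neq0 : x2 != 0.
Proof. by rewrite tofrac_eq0 polyX_eq0. Qed.

Lemma polyx1_comm (y : KL) : commr_rmorph polyx1 y.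
Proof. by move=> a; rewrite /GRing.comm mulrC. Qed.

(* evalx2 y p = p(x1, y): evaluation of p in F[x1][x2] at x2 = y. *)
Definition evalx2 (y : KL) : Rpol -> KL := horner_morph (polyx1_comm y).
HB.instance Definition _ y :=
  GRing.RMorphism.copy (evalx2 y) (horner_morph (polyx1_comm y)).

Lemma evalx2E y (p : Rpol) D : (size p <= D)%N ->
  evalx2 y p = \sum_(i < D) polyx1 p`_i * y ^+ i.
Proof.
move=> hD; rewrite /evalx2 /horner_morph (horner_coef_wide _ (_ : size _ <= D)%N).
  by apply: eq_bigr => i _; rewrite coef_map.
by rewrite size_map_inj_poly ?rmorph0 //; exact: polyx1_inj.
Qed.

Lemma subst2_x1 y (p : Rpol) : subst2 x1 y p = evalx2 y p.
Proof.
rewrite (evalx2E _ (leqnn _)) /subst2; apply: eq_bigr => i _; rewrite -mulr_suml.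
congr (_ * _); rewrite /polyx1 /= -[in RHS](coefK p`_i) poly_def !rmorph_sum /=.
by apply: eq_bigr => j _; rewrite -mul_polyC !rmorphM !rmorphXn.
Qed.

Lemma tofrac_poly D (E : nat -> {poly F}) :
  tofrac (\poly_(i < D) E i : Rpol) = \sum_(i < D) polyx1 (E i) * x2 ^+ i.
Proof.
rewrite poly_def rmorph_sum /=.
by apply: eq_bigr => j _; rewrite -mul_polyC rmorphM rmorphXn.
Qed.

Lemma tofrac_evalx2 (p : Rpol) : tofrac p = evalx2 x2 p.
Proof. by rewrite (evalx2E _ (leqnn _)) -tofrac_poly coefK. Qed.

Record ratfun := RatFun {
  rnum : {poly F}; rden : {poly F}; rnum_neq0 : rnum != 0; rden_neq0 : rden != 0 }.

Definition rval (r : ratfun) : KL := polyx1 (rnum r) / polyx1 (rden r).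

Lemma rval_neq0 r : rval r != 0.
Proof. by rewrite /rval mulf_neq0 ?invr_eq0 ?polyx1_neq0 ?rnum_neq0 ?rden_neq0. Qed.

Lemma evalx2_ratio (u v : {poly F}) (p : Rpol) D : v != 0 -> (size p <= D)%N ->
  evalx2 (x2 * (polyx1 u / polyx1 v)) p =
  tofrac (\poly_(i < D) (p`_i * u ^+ i * v ^+ (D - i)) : Rpol) / polyx1 v ^+ D.
Proof.
move=> hv hD; rewrite (evalx2E _ hD) tofrac_poly mulr_suml.
apply: eq_bigr => [[i /ltnW hi]] _ /=.
have hvD : polyx1 v ^+ (D - i) != 0 by rewrite expf_neq0 ?polyx1_neq0.
have hvi : polyx1 v ^+ i != 0 by rewrite expf_neq0 ?polyx1_neq0.
rewrite !rmorphM !rmorphXn /= -[in polyx1 v ^+ D](subnKC hi) exprD exprMn expr_div_n.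
by rewrite (mul_ratio_rearrange _ _ _ hvi hvD).
Qed.

Lemma evalx2_ratio_eq0 r (p : Rpol) : (evalx2 (x2 * rval r) p == 0) = (p == 0).
Proof.
apply/eqP/eqP => [|->]; last exact: rmorph0.
rewrite (evalx2_ratio _ (rden_neq0 r) (leqnn (size p))) => /eqP.
rewrite mulf_eq0 invr_eq0 expf_eq0 (negPf (polyx1_neq0 (rden_neq0 r))) andbF orbF.
rewrite tofrac_eq0 => /eqP /polyP h; apply/polyP => i; move: (h i).
rewrite coef_poly coef0; case: ltnP => [_ /eqP|hi _]; last by rewrite nth_default.
by rewrite !mulf_eq0 !expf_eq0 (negPf (rnum_neq0 r)) (negPf (rden_neq0 r)) !andbF !orbF => /eqP.
Qed.

(* The twist by r: the automorphism of K_L fixing x1 with x2 |-> x2 * rval r,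
   computed on the canonical representative as mu is. *)
Definition twist (r : ratfun) (f : KL) : KL :=
  subst2 x1 (x2 * rval r) \n_(repr f) / subst2 x1 (x2 * rval r) \d_(repr f).

(* The twist does not depend on the chosen representative. *)
Lemma twistE r (p q : Rpol) : q != 0 ->
  twist r (tofrac p / tofrac q) = evalx2 (x2 * rval r) p / evalx2 (x2 * rval r) q.
Proof.
move=> hq; rewrite /twist !subst2_x1; set f := tofrac p / tofrac q.
have : tofrac p / tofrac q = tofrac \n_(repr f) / tofrac \d_(repr f) :> KL.
  by rewrite -tofrac_repr.
move/eqP; rewrite eqr_div ?tofrac_eq0 ?denom_ratioP // -!rmorphM tofrac_eq => /eqP h.
apply/eqP; rewrite eqr_div ?evalx2_ratio_eq0 ?denom_ratioP //.
by rewrite -!rmorphM h.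
Qed.

Lemma twist_tofrac r p : twist r (tofrac p) = evalx2 (x2 * rval r) p.
Proof. by rewrite -[tofrac p]divr1 -tofrac1 twistE ?oner_neq0 // rmorph1 divr1. Qed.

Lemma twistB r : zmod_morphism (twist r).
Proof.
move=> f g; have [a [b [hb ->]]] := fracP f; have [c [d [hd ->]]] := fracP g.
have hbd : b * d != 0 by rewrite mulf_neq0.
rewrite -mulNr addf_div ?tofrac_eq0 // mulNr -!tofracM -tofracB twistE //.
rewrite !twistE // rmorphB !rmorphM -[in X in _ = X]mulNr addf_div ?evalx2_ratio_eq0 //.
by rewrite mulNr.
Qed.

Lemma twistM r : monoid_morphism (twist r).
Proof.
split; first by rewrite -tofrac1 twist_tofrac rmorph1.
move=> f g; have [a [b [hb ->]]] := fracP f; have [c [d [hd ->]]] := fracP g.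
rewrite mulf_div -!tofracM !twistE ?mulf_neq0 //.
by rewrite (rmorphM (evalx2 _) a c) (rmorphM (evalx2 _) b d) mulf_div.
Qed.

HB.instance Definition _ r := GRing.isZmodMorphism.Build KL KL (twist r) (twistB r).
HB.instance Definition _ r := GRing.isMonoidMorphism.Build KL KL (twist r) (twistM r).

Lemma twist_polyx1 r u : twist r (polyx1 u) = polyx1 u.
Proof. by rewrite /polyx1 /= twist_tofrac /evalx2 /horner_morph map_polyC hornerC. Qed.

Lemma twist_x1 r : twist r x1 = x1.
Proof. exact: (twist_polyx1 r 'X). Qed.

Lemma twist_x2 r : twist r x2 = x2 * rval r.
Proof. by rewrite twist_tofrac /evalx2 /horner_morph map_polyX hornerX. Qed.

Lemma twist_rval r s : twist r (rval s) = rval s.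
Proof. by rewrite /rval fmorph_div /= !twist_polyx1. Qed.

Lemma rmorph_ext (phi psi : {rmorphism KL -> KL}) :
  (forall u, phi (polyx1 u) = psi (polyx1 u)) -> phi x2 = psi x2 -> phi =1 psi.
Proof.
move=> hC hx f; have [p [q [hq ->]]] := fracP f; rewrite !fmorph_div.
suff h (a : Rpol) : phi (tofrac a) = psi (tofrac a) by rewrite !h.
rewrite tofrac_evalx2 /evalx2 /horner_morph -!horner_map /= hx.
by rewrite -!map_poly_comp; congr (_.[_]); apply: eq_map_poly => u /=.
Qed.

Lemma twist_comp r s t f :
  rval t = rval r * rval s -> twist r (twist s f) = twist t f.
Proof.
move=> h; apply: (rmorph_ext (phi := (twist r \o twist s)%FUN)) => [u|] /=.
  by rewrite !twist_polyx1.
by rewrite !twist_x2 rmorphM /= twist_x2 twist_rval h mulrA.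
Qed.

Lemma twist_id r f : rval r = 1 -> twist r f = f.
Proof.
move=> h; have [p [q [hq ->]]] := fracP f.
by rewrite twistE // h mulr1 -!tofrac_evalx2.
Qed.

Definition rexp (r : ratfun) (n : nat) : ratfun :=
  RatFun (expf_neq0 n (rnum_neq0 r)) (expf_neq0 n (rden_neq0 r)).

Definition rinv (r : ratfun) : ratfun := RatFun (rden_neq0 r) (rnum_neq0 r).

Definition rpow (r : ratfun) (z : int) : ratfun :=
  match z with Posz n => rexp r n | Negz n => rinv (rexp r n.+1) end.

Lemma rval_pow r z : rval (rpow r z) = rval r ^ z.
Proof.
have rval_exp n : rval (rexp r n) = rval r ^+ n by rewrite /rval !rmorphXn expr_div_n.
have rval_inv s : rval (rinv s) = (rval s)^-1 by rewrite /rval invf_div.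
by case: z => n; rewrite /= ?rval_inv rval_exp.
Qed.

Lemma twist_pow_comp r z w f :
  twist (rpow r z) (twist (rpow r w) f) = twist (rpow r (z + w)) f.
Proof. by apply: twist_comp; rewrite !rval_pow expfzDr ?rval_neq0. Qed.

Lemma twist_pow0 r f : twist (rpow r 0) f = f.
Proof. by apply: twist_id; rewrite rval_pow expr0z. Qed.

Lemma twist_pow1 r f : twist (rpow r 1) f = twist r f.
Proof. by rewrite /twist rval_pow expr1z. Qed.

Lemma iter_twist r n f : iter n (twist r) f = twist (rpow r n) f.
Proof.
elim: n => [|n IH]; first by rewrite twist_pow0.
by rewrite iterS IH -twist_pow1 twist_pow_comp -intS.
Qed.

Definition x1x2 : Rpol := ('X : {poly F})%:P * 'X.

Lemma tofrac_x1x2 : tofrac x1x2 = x1 * x2.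
Proof. exact: tofracM. Qed.

Lemma x1x2_neq0 : x1 * x2 != 0.
Proof. exact: mulf_neq0 x1_neq0 x2_neq0. Qed.

Lemma laurent_tofrac (p : Rpol) : laurent (tofrac p).
Proof. by exists p, 0%N; rewrite expr0 divr1. Qed.

Lemma laurentM f g : laurent f -> laurent g -> laurent (f * g).
Proof.
move=> [p [n ->]] [q [m ->]]; exists (p * q), (n + m)%N.
by rewrite mulf_div -exprD tofracM.
Qed.

Lemma laurentD f g : laurent f -> laurent g -> laurent (f + g).
Proof.
move=> [p [n ->]] [q [m ->]]; exists (p * x1x2 ^+ m + q * x1x2 ^+ n), (n + m)%N.
by rewrite addf_div ?expf_neq0 ?x1x2_neq0 // exprD !tofracD !tofracM !tofracXn tofrac_x1x2.
Qed.

Lemma laurentX f n : laurent f -> laurent (f ^+ n).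
Proof.
move=> hf; elim: n => [|n IH]; last by rewrite exprS; apply: laurentM.
by rewrite expr0 -tofrac1; apply: laurent_tofrac.
Qed.

Lemma laurent_sum n (E : 'I_n -> KL) :
  (forall i, laurent (E i)) -> laurent (\sum_(i < n) E i).
Proof.
move=> hE; apply: (big_ind laurent) => //; last exact: laurentD.
by rewrite -tofrac0; apply: laurent_tofrac.
Qed.

Lemma laurent_inv_monomial a b : laurent ((x1 ^+ a * x2 ^+ b)^-1).
Proof.
exists ('X^a * ('X^b : {poly F})%:P), (a + b)%N.
by rewrite (inv_monomial _ _ x1_neq0 x2_neq0) tofracM tofracXn -polyx1Xn.
Qed.

Lemma laurent_x1 n : laurent (x1 ^+ n).
Proof. by rewrite -polyx1Xn; apply: laurent_tofrac. Qed.

Lemma laurent_x1V n : laurent (x1 ^+ n)^-1.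
Proof. by have := laurent_inv_monomial n 0; rewrite expr0 mulr1. Qed.

Definition rmono (a b : nat) : ratfun :=
  RatFun (expf_neq0 a (monic_neq0 (monicX F))) (expf_neq0 b (monic_neq0 (monicX F))).

Lemma rval_mono a b : rval (rmono a b) = x1 ^+ a / x1 ^+ b.
Proof. by rewrite /rval /= !polyx1Xn. Qed.

(* Monomial twists preserve Laurent polynomials: they send x1^±1 and x2^±1 to
   Laurent monomials. *)
Lemma laurent_twist_rmono a b f : laurent f -> laurent (twist (rmono a b) f).
Proof.
have laurent_y : laurent (x2 * rval (rmono a b)).
  rewrite rval_mono; apply: laurentM; first exact: laurent_tofrac.
  by apply: laurentM; [apply: laurent_x1 | apply: laurent_x1V].
case=> p [n ->]; rewrite fmorph_div /= rmorphXn rmorphM /= twist_x1 twist_x2 twist_tofrac.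
apply: laurentM.
  rewrite (evalx2E _ (leqnn _)); apply: laurent_sum => i.
  by apply: laurentM; [apply: laurent_tofrac | apply: laurentX].
rewrite -exprVn rval_mono (inv_twisted_monomial _ _ x1_neq0 x2_neq0).
by apply: laurentX; apply: laurentM; [apply: laurent_x1 | apply: laurent_inv_monomial].
Qed.

Lemma laurent_twist_monomial_factor r t a b f :
  rval r = x1 ^+ a / x1 ^+ b * rval t -> laurent (twist t f) -> laurent (twist r f).
Proof.
move=> h ht; rewrite -(twist_comp (r := rmono a b) (s := t)) ?rval_mono //.
exact: laurent_twist_rmono.
Qed.

Definition rqinv (q : {poly F}) (hq : q != 0) (j : nat) : ratfun :=
  RatFun (oner_neq0 {poly F}) (expf_neq0 j hq).

Lemma twist_rqinv q (hq : q != 0) j (p : Rpol) n :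
  twist (rqinv hq j) (tofrac p / (x1 * x2) ^+ n) =
  tofrac (\poly_(i < size p + n) (p`_i * (q ^+ j) ^+ (size p + n - i)) : Rpol)
    / (polyx1 ((q ^+ j) ^+ size p) * (x1 * x2) ^+ n).
Proof.
rewrite fmorph_div /= twist_tofrac rmorphXn rmorphM /= twist_x1 twist_x2.
rewrite (evalx2_ratio _ (rden_neq0 _) (leq_addr n (size p))) /rval /= rmorph1.
rewrite (div_twisted_pow _ (leq_addl _ _) x1_neq0 x2_neq0 (polyx1_neq0 (expf_neq0 j hq))).
rewrite addnK -rmorphXn; congr (tofrac _ / _).
by apply: eq_poly => i _; rewrite expr1n mulr1.
Qed.

Lemma dvdp_coef_x1x2 (T B : Rpol) (c : {poly F}) M i :
  T * x1x2 ^+ M = B * c%:P -> c %| T`_i * 'X^M.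
Proof.
move=> /(congr1 (fun s : Rpol => s`_(i + M))).
rewrite /x1x2 exprMn -rmorphXn mulrA coefMXn ltnNge leq_addl /= addnK !coefMC => ->.
exact: dvdp_mull (dvdpp c).
Qed.

Lemma laurent_twist_rqinv q (hq : q != 0) (hcop : coprimep q 'X) j (p : Rpol) n :
  laurent (twist (rqinv hq j) (tofrac p / (x1 * x2) ^+ n)) <->
  forall i, (n <= i)%N -> (q ^+ j) ^+ (i - n) %| p`_i.
Proof.
rewrite twist_rqinv; set c := q ^+ j; set D := (size p + n)%N.
set T := \poly_(i < D) _.
have hc : c != 0 by rewrite expf_neq0.
have hden : polyx1 (c ^+ size p) * (x1 * x2) ^+ n != 0.
  by rewrite mulf_neq0 ?polyx1_neq0 ?expf_neq0 // x1x2_neq0.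
split=> [[B [M heq]] i hni | hdvd].
  have [hiD | hDi] := ltnP i D; last first.
    by rewrite nth_default ?dvdp0 // (leq_trans (leq_addr n _)).
  have cross : T * x1x2 ^+ M = (B * x1x2 ^+ n) * (c ^+ size p)%:P.
    move/eqP: heq; rewrite (eqr_div _ _ hden (expf_neq0 M x1x2_neq0)).
    rewrite -tofrac_x1x2 -!tofracXn -!tofracM tofrac_eq => /eqP ->.
    by rewrite mulrCA mulrC.
  have := dvdp_coef_x1x2 i cross; rewrite /T coef_poly hiD.
  have -> : size p = (i - n + (D - i))%N by move: hiD hni; rewrite /D; lia.
  rewrite exprD -mulrA (mulrC (c ^+ (D - i))) mulrA dvdp_mul2r ?expf_neq0 //.
  have hcopX : coprimep (c ^+ (i - n)) 'X^M.
    by apply: coprimep_expl; apply: coprimep_expl; apply: coprimep_expr.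
  by rewrite (Gauss_dvdpl _ hcopX).
pose B := \poly_(i < D) (if (i < n)%N then p`_i * c ^+ (n - i) else p`_i %/ c ^+ (i - n)).
exists B, n; have -> : T = B * (c ^+ size p)%:P.
  apply/polyP => i; rewrite coefMC !coef_poly; case: ltnP => hiD; last by rewrite mul0r.
  case: ltnP => hni.
    by rewrite -mulrA -exprD; congr (_ * c ^+ _); move: hni; rewrite /D; lia.
  rewrite -{1}(divpK (hdvd i hni)) -mulrA -exprD; congr (_ * c ^+ _).
  by move: hni hiD; rewrite /D; lia.
have hcp : polyx1 (c ^+ size p) != 0 := polyx1_neq0 (expf_neq0 _ hc).
by rewrite tofracM invfM mulrA (mulfK hcp).
Qed.

(* The divisibility conditions weaken as j decreases. *)
Lemma laurent_rqinv_convex q (hq : q != 0) (hcop : coprimep q 'X) h n j :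
  laurent h -> laurent (twist (rqinv hq n) h) -> (j <= n)%N ->
  laurent (twist (rqinv hq j) h).
Proof.
case=> p [N ->]; rewrite !laurent_twist_rqinv // => hn hjn i hi.
by apply: dvdp_trans (hn i hi); rewrite -!exprM dvdp_exp2l // leq_mul.
Qed.

Section Convexity.
Variables (T : ratfun) (s : nat) (q : {poly F}) (hq : q != 0).
Hypotheses (hcop : coprimep q 'X) (hT : rval T = x1 ^+ s / polyx1 q).

(* The n-th power of x2 |-> x2 x1^s / q is x2 |-> x2 / q^n up to a monomial. *)
Lemma laurent_pow_rqinv (m : nat) f :
  laurent (twist (rpow T m) f) <-> laurent (twist (rqinv hq m) f).
Proof.
have hQ : polyx1 q != 0 := polyx1_neq0 hq.
have hqm : rval (rqinv hq m) = 1 / polyx1 q ^+ m by rewrite /rval /= rmorph1 rmorphXn.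
split; apply: laurent_twist_monomial_factor; rewrite rval_pow hT hqm.
  exact: pow_ratio_unsplit x1_neq0 hQ.
exact: pow_ratio_split x1_neq0 hQ.
Qed.

Lemma laurent_orbit_convex f (i l j : int) :
  laurent (twist (rpow T i) f) -> laurent (twist (rpow T j) f) -> i <= l <= j ->
  laurent (twist (rpow T l) f).
Proof.
move=> hi hj /andP[hil hlj]; set h := twist (rpow T i) f.
have shift z : twist (rpow T z) f = twist (rpow T (z - i)) h.
  by rewrite /h twist_pow_comp subrK.
have nat_gap z : i <= z -> exists n : nat, z - i = n.
  by move=> hiz; exists `|z - i|%N; rewrite gez0_abs // subr_ge0.
have [n en] := nat_gap j (le_trans hil hlj); have [m em] := nat_gap l hil.
have hn : laurent (twist (rqinv hq n) h).
  by apply: (laurent_pow_rqinv n h).1; rewrite -en -shift.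
rewrite shift em; apply: (laurent_pow_rqinv m h).2.
apply: (laurent_rqinv_convex hcop hi hn).
by rewrite -lez_nat -em -en lerD2r.
Qed.

End Convexity.

Lemma in_mu_pow_image_iff k v r n f : mu k v =1 twist r ->
  in_mu_pow_image k v n f <-> laurent (twist (rpow r (- n%:Z)) f).
Proof.
move=> hmu; split=> [[h [hh ->]] | hf].
  by rewrite (eq_iter hmu) iter_twist twist_pow_comp addNr twist_pow0.
exists (twist (rpow r (- n%:Z)) f); split => //.
by rewrite (eq_iter hmu) iter_twist twist_pow_comp subrr twist_pow0.
Qed.

Section UpperBound.
Variables (k : int) (T T' : ratfun) (a b : nat).
Hypotheses (he2 : mu k (0, 1) =1 twist T) (hme2 : mu k (0, -1) =1 twist T').
Hypothesis hTT' : rval T * rval T' = x1 ^+ a / x1 ^+ b.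

(* Since twist T' is a monomial twist of the inverse of twist T, the (-n)-th
   power of twist T' and the n-th power of twist T agree on Laurentness. *)
Lemma laurent_twist_cofactor (n : nat) f :
  laurent (twist (rpow T' (- n%:Z)) f) <-> laurent (twist (rpow T n) f).
Proof.
have hT := rval_neq0 T.
split; apply: laurent_twist_monomial_factor; rewrite !rval_pow -exprnN.
  exact: pow_cofactor hT x1_neq0 hTT'.
exact: inv_pow_cofactor hT x1_neq0 hTT'.
Qed.

Lemma upper_boundE m1 m2 f :
  upper_bound k (coll_e2 m1 m2) f <->
  [/\ laurent f, laurent (twist (rpow T (- m1%:Z)) f) & laurent (twist (rpow T m2) f)].
Proof.
split=> [[hf hv] | [hf h1 h2]].
  split=> //; first by apply/(in_mu_pow_image_iff _ _ he2); have := hv (0, 1).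
  apply: (laurent_twist_cofactor m2 f).1.
  by apply/(in_mu_pow_image_iff _ _ hme2); have := hv (0, -1); rewrite /coll_e2.
split=> // v; rewrite /coll_e2.
case: eqP => [->|_]; first exact/(in_mu_pow_image_iff _ _ he2).
case: eqP => [->|_]; first exact/(in_mu_pow_image_iff _ _ hme2)/laurent_twist_cofactor.
by exists f.
Qed.

End UpperBound.

Lemma mu_twist k v r :
  pairing (1, 0) v = 0 -> muimg k v (0, 1) = x2 * rval r -> mu k v =1 twist r.
Proof.
move=> hv hx2 g; have hx1 : muimg k v (1, 0) = x1.
  by rewrite /muimg hv oppr0 expr0z mulr1 /mono /= expr0z expr1z mulr1.
by rewrite /mu hx1 hx2.
Qed.

Lemma muimg_e2 k : muimg k (0, 1) (0, 1) = x2 * (1 + x1 ^ k)^-1.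
Proof.
rewrite /muimg /omega_v /= mulr1 mulr0 oppr0 /mono /= expr0z expr1z mul1r mulr1.
by rewrite exprN1.
Qed.

Lemma muimg_me2 k : muimg k (0, -1) (0, 1) = x2 * (1 + x1 ^ (- k)).
Proof.
rewrite /muimg /omega_v /= mulrN1 mulr0 oppr0 /mono /= expr0z expr1z mul1r mulr1.
by have -> : pairing (0, 1) (0, -1) = -1 by []; rewrite opprK expr1z.
Qed.

Lemma one_plus_Xn c : (0 < c)%N ->
  (1 + 'X^c : {poly F}) != 0 /\ coprimep (1 + 'X^c : {poly F}) 'X.
Proof.
move=> hc; have hroot : ~~ root (1 + 'X^c : {poly F}) 0.
  by rewrite rootE !hornerE expr0n eqn0Ngt hc addr0 oner_neq0.
by split; [apply: contra hroot => /eqP ->; rewrite root0 | rewrite coprimepX].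
Qed.

Lemma polyx1_one_plus_Xn c : polyx1 (1 + 'X^c) = 1 + x1 ^+ c.
Proof. by rewrite rmorphD rmorph1 /= polyx1Xn. Qed.

Lemma mu_e2_twists k : k != 0 ->
  exists (T T' : ratfun) (q : {poly F}) (s b : nat), q != 0 /\
  [/\ coprimep q 'X, rval T = x1 ^+ s / polyx1 q, rval T * rval T' = x1 ^+ s / x1 ^+ b,
      mu k (0, 1) =1 twist T & mu k (0, -1) =1 twist T'].
Proof.
have hX n : ('X^n : {poly F}) != 0 := expf_neq0 n (monic_neq0 (monicX F)).
case: k => [c hk | c _].
  have hc : (0 < c)%N by case: c hk.
  have [hq hcop] := one_plus_Xn hc.
  exists (RatFun (hX 0%N) hq), (RatFun hq (hX c)), (1 + 'X^c), 0%N, c.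
  split; first exact: hq.
  split; first exact: hcop.
  - by rewrite /rval /= polyx1Xn.
  - by rewrite /rval /= mulrA (divfK (polyx1_neq0 hq)) !polyx1Xn.
  - apply: mu_twist => //; rewrite muimg_e2 /rval /= polyx1_one_plus_Xn.
    by rewrite polyx1Xn expr0 div1r.
  - apply: mu_twist => //; rewrite muimg_me2 /rval /= polyx1_one_plus_Xn polyx1Xn.
    by rewrite -exprnN (add1_invf (expf_neq0 c x1_neq0)).
have [hq hcop] := one_plus_Xn (ltn0Sn c).
exists (RatFun (hX c.+1) hq), (RatFun hq (hX 0%N)), (1 + 'X^(c.+1)), c.+1, 0%N.
split; first exact: hq.
split; first exact: hcop.
- by rewrite /rval /= polyx1Xn.
- by rewrite /rval /= mulrA (divfK (polyx1_neq0 hq)) !polyx1Xn.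
- apply: mu_twist => //; rewrite muimg_e2 /rval /= polyx1_one_plus_Xn polyx1Xn.
  by rewrite NegzE -exprnN (add1_invf (expf_neq0 _ x1_neq0)) invf_div.
- apply: mu_twist => //; rewrite muimg_me2 /rval /= polyx1_one_plus_Xn polyx1Xn.
  by rewrite NegzE opprK expr0 divr1.
Qed.

End RankTwo.

Theorem proposition3p7 (F : fieldType) (k : int) (m1 m2 : nat) :
  k != 0 -> (1 <= m1)%N ->
  forall f : KL F,
    upper_bound k (coll_e2 m1 m2) f <->
    exists g : KL F, upper_bound k (coll_e2 m1.-1 m2.+1) g /\ f = mu k (0, 1) g.
Proof.
move=> hk hm1 f.
have [T [T' [q [s [b [hq [hcop hT hTT' he2 hme2]]]]]]] := @mu_e2_twists F k hk.
have ubE := upper_boundE he2 hme2 hTT'.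
have convex := laurent_orbit_convex hq hcop hT.
case: m1 hm1 => // m _ /=; rewrite ubE; split.
  case=> hf hneg hpos; exists (twist (rpow T (-1)) f); split.
    apply/ubE; rewrite !twist_pow_comp; split.
    - by apply: (convex _ (- m.+1%:Z) _ 0); rewrite ?twist_pow0 //; lia.
    - by have -> : - m%:Z + -1 = - m.+1%:Z by lia.
    - by have -> : m2.+1%:Z + -1 = m2 by lia.
  by rewrite he2 -twist_pow1 twist_pow_comp subrr twist_pow0.
case=> g [/ubE [hg hneg hpos] ->]; rewrite he2 -twist_pow1 !twist_pow_comp; split.
- by apply: (convex _ 0 _ m2.+1); rewrite ?twist_pow0 //; lia.
- by have -> : - m.+1%:Z + 1 = - m%:Z by lia.
- by have -> : m2%:Z + 1 = m2.+1 by lia.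
Qed.
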